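(* Let $n,d\geq 1$. For every $n$-tuple $\mathbf{Q}=(Q_1,\dots,Q_n)$ of distinct points in $\mathbb{E}^d$ and every set $T$ of unordered pairs $\{i,j\}\subseteq\{1,\dots,n\}$, $$\dim T\leq\min\big(n-c(T)-1,\;d-1\big).$$ Moreover, the set of $n$-tuples $\mathbf{Q}$ for which equality holds for every such $T$ is open and dense in $(\mathbb{E}^d)^n$, and every $n$-tuple in this set is in simple position.
   Context: $\mathbb{E}^d$ is embedded in real projective space $\mathbb{P}^d$, with ideal hyperplane $h_\infty=\mathbb{P}^d\setminus\mathbb{E}^d$. For $i\neq j$, $p_{ij}$ is the ideal point of the line $Q_iQ_j$, i.e. the intersection of its projective closure with $h_\infty$. For a set $T$ of unordered pairs $\{i,j\}$, $\dim T$ is the projective dimension of the subspace of $h_\infty$ spanned by $\{p_{ij}:\{i,j\}\in T\}$ (with $\dim\emptyset=-1$), and $c(T)$ is the number of connected components of the graph with vertex set $\{1,\dots,n\}$ and edge set $T$ (isolated vertices counting as components). $\mathbf{Q}$ is in simple position if every subset of at most $d+1$ of the points $Q_1,\dots,Q_n$ is affinely independent. *)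

From HB Require Import structures.
From mathcomp Require Import all_boot all_order all_algebra.
From mathcomp Require Import all_classical all_reals topology normedtype.
Set Implicit Arguments. Unset Strict Implicit. Unset Printing Implicit Defensive.
Import Order.TTheory GRing.Theory Num.Theory.
Import numFieldNormedType.Exports.
Local Open Scope ring_scope.

(* An n-tuple of points of E^d is a matrix Q : 'M[R]_(n,d) whose i-th row is Q_i. *)

Definition distinct_pts (R : realType) (n d : nat) (Q : 'M[R]_(n, d)) : Prop :=
  injective (fun i : 'I_n => row i Q).

Definition pairset (n : nat) (T : {set {set 'I_n}}) : Prop :=
  forall e, e \in T -> #|e| = 2%N.

Definition adjT (n : nat) (T : {set {set 'I_n}}) : rel 'I_n :=
  fun i j => [set i; j] \in T.

(* c(T): number of connected components (isolated vertices count). *)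
Definition ncompT (n : nat) (T : {set {set 'I_n}}) : nat :=
  n_comp (adjT T) (predT : pred 'I_n).

(* The ideal point p_ij of line Q_iQ_j is represented (homogeneously) by the
   direction vector Q_j - Q_i; the projective span of {p_ij : ij in T} in
   h_infty ~ P^{d-1} has projective dimension = (linear rank of the span of
   these direction vectors) - 1, with dim(empty) = -1. *)
Definition dirspace (R : realType) (n d : nat) (Q : 'M[R]_(n, d))
    (T : {set {set 'I_n}}) : 'M[R]_d :=
  (\sum_(ij : 'I_n * 'I_n | [set ij.1; ij.2] \in T)
      <<row ij.2 Q - row ij.1 Q>>)%MS.

Definition dimT (R : realType) (n d : nat) (Q : 'M[R]_(n, d))
    (T : {set {set 'I_n}}) : int :=
  (\rank (dirspace Q T))%:Z - 1.

Definition affine_indep (R : realType) (n d : nat) (Q : 'M[R]_(n, d))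
    (S : {set 'I_n}) : Prop :=
  forall l : 'I_n -> R,
    \sum_(i in S) l i = 0 ->
    \sum_(i in S) l i *: row i Q = 0 ->
    forall i, i \in S -> l i = 0.

Definition simple_position (R : realType) (n d : nat) (Q : 'M[R]_(n, d)) : Prop :=
  forall S : {set 'I_n}, (#|S| <= d.+1)%N -> affine_indep Q S.

Definition dim_bound (n d : nat) (T : {set {set 'I_n}}) : int :=
  Num.min (n%:Z - (ncompT T)%:Z - 1) (d%:Z - 1).

Definition generic_set (R : realType) (n d : nat) : set 'M[R]_(n, d) :=
  [set Q | distinct_pts Q /\
     forall T : {set {set 'I_n}}, pairset T -> dimT Q T = dim_bound d T].
Arguments generic_set : clear implicits.

From HB Require Import structures.
From mathcomp Require Import all_boot all_order all_algebra.
From mathcomp Require Import all_classical all_reals topology normedtype.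
From mathcomp Require Import perm zify.
Import Order.TTheory GRing.Theory Num.Theory.
Import numFieldNormedType.Exports.
Set Implicit Arguments. Unset Strict Implicit. Unset Printing Implicit Defensive.
Local Open Scope ring_scope.

(* The direction space of T is spanned by the vectors Q_x - Q_(r x), where x
   ranges over the n - c(T) vertices other than the chosen root r x of their
   component; this gives the upper bound.  The direction space is the row space
   of a matrix depending linearly on Q.  "Rank at least k" is an open condition,
   since the Gram determinant of a row-free row selection stays nonzero nearby,
   and it is dense once attained somewhere, since along a segment that Gram
   determinant is a polynomial which is nonzero at one end.  Intersecting over
   the finitely many T gives the open dense set.  For the star joining s0 to a
   set S of at most d points, equality forces the vectors Q_x - Q_s0 (x in S)
   to be independent, which is simple position. *)

Section GramDeterminant.
Variable R : realFieldType.

Lemma mul_trmx_self_eq0 p (w : 'rV[R]_p) : (w *m w^T == 0) = (w == 0).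
Proof.
apply/eqP/eqP => [|->]; last by rewrite mul0mx.
move/matrix.matrixP/(_ 0 0); rewrite !mxE => ww0.
have sq0 : \sum_j w 0 j ^+ 2 = 0.
  by rewrite -[RHS]ww0; apply: eq_bigr => j _; rewrite mxE expr2.
apply/matrix.rowP => k; rewrite mxE; apply/eqP; rewrite -sqrf_eq0.
by rewrite (psumr_eq0P (fun j _ => sqr_ge0 (w 0 j)) sq0).
Qed.

Lemma row_free_gram m p (C : 'M[R]_(m, p)) : row_free C = (\det (C *m C^T) != 0).
Proof.
rewrite -unitfE -unitmxE; apply/idP/idP => [freeC|/mxrank_unit rkG]; last first.
  by rewrite /row_free eqn_leq rank_leq_row -{1}rkG mxrankM_maxl.
rewrite -row_free_unit -kermx_eq0 -submx0; apply/row_subP => i; rewrite submx0.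
move: (row i _) (row_sub i (kermx (C *m C^T))) => v /sub_kermxP; rewrite mulmxA => vG0.
have /eqP vC0 : v *m C == 0.
  by rewrite -mul_trmx_self_eq0 trmx_mul mulmxA vG0 mul0mx.
by apply/eqP/(row_free_inj freeC); rewrite /= vC0 mul0mx.
Qed.
End GramDeterminant.

Lemma gram_det_line_poly (R : comRingType) m p (A0 A1 : 'M[R]_(m, p)) :
  exists P : {poly R},
    forall t, P.[t] = \det ((A0 + t *: A1) *m (A0 + t *: A1)^T).
Proof.
pose L : 'M[{poly R}]_(m, p) := map_mx polyC A0 + 'X *: map_mx polyC A1.
exists (\det (L *m L^T)) => t.
have -> : A0 + t *: A1 = map_mx (horner_eval t) L.
  by apply/matrix.matrixP => i j; rewrite !mxE /= horner_evalE !hornerE.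
by rewrite map_trmx -map_mxM det_map_mx.
Qed.

Section RankLowerSemicontinuity.
Variables (R : realType) (X : topologicalType).
Local Open Scope classical_set_scope.

Lemma continuous_sum (I : Type) (r : seq I) (P : pred I) (F : I -> X -> R) :
  (forall i, P i -> continuous (F i)) -> continuous (fun x => \sum_(i <- r | P i) F i x).
Proof. exact/continuous_big/add_continuous. Qed.

Lemma continuous_prod (I : Type) (r : seq I) (P : pred I) (F : I -> X -> R) :
  (forall i, P i -> continuous (F i)) -> continuous (fun x => \prod_(i <- r | P i) F i x).
Proof. exact/continuous_big/mul_continuous. Qed.

Lemma continuous_det m (A : X -> 'M[R]_m) :
  (forall i j, continuous (fun x => A x i j)) -> continuous (fun x => \det (A x)).
Proof.
move=> contA; apply: continuous_sum => s _ x.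
have := @continuousM R X (fun=> (-1) ^+ s) (fun y => \prod_i A y i (s i)) x.
apply; first exact: cst_continuous.
by apply: continuous_prod => i _; exact: contA.
Qed.

Lemma continuous_gram_det m p (C : X -> 'M[R]_(m, p)) :
  (forall i j, continuous (fun x => C x i j)) ->
  continuous (fun x => \det (C x *m (C x)^T)).
Proof.
move=> contC; apply: continuous_det => i j.
under eq_fun do rewrite mxE; apply: continuous_sum => k _ x.
by under eq_fun do rewrite mxE; apply: continuousM; exact: contC.
Qed.

Lemma open_rank_ge m p (A : X -> 'M[R]_(m, p)) r :
  (forall i j, continuous (fun x => A x i j)) -> open [set x | (r <= \rank (A x))%N].
Proof.
move=> contA; rewrite openE => x /= le_r_rkAx.
pose f := maxrankfun (A x).
have contAf : continuous (fun y => \det (rowsub f (A y) *m (rowsub f (A y))^T)).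
  by apply: continuous_gram_det => i j; under eq_fun do rewrite mxE; exact: contA.
have : \det (rowsub f (A x) *m (rowsub f (A x))^T) != 0.
  by rewrite -row_free_gram maxrowsub_free.
move/(cvgr_neq0 _ (contAf x)); apply: filterS => y /=; rewrite -row_free_gram => /eqP rk_sub.
by apply: leq_trans le_r_rkAx _; rewrite -{1}rk_sub; exact/mxrankS/rowsub_sub.
Qed.

End RankLowerSemicontinuity.

Lemma continuous_mulmx_entry (R : realType) m a b (E : 'M[R]_(m, a)) i j :
  continuous (fun Q : 'M[R]_(a, b) => (E *m Q) i j).
Proof.
under eq_fun do rewrite mxE; apply: continuous_sum => k _ Q.
apply: (@continuousM R _ (fun=> E i k) (fun Q : 'M[R]_(a, b) => Q k j)).
  exact: cst_continuous.
exact: coord_continuous.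
Qed.

Section Density.
Variable R : realType.
Local Open Scope classical_set_scope.

Lemma poly_nonroot_near (P : {poly R}) (x : R) (A : set R) :
  P != 0 -> nbhs x A -> exists2 t, A t & P.[t] != 0.
Proof.
move=> P_neq0 /nbhs_ballP [e e_gt0 xeA].
pose ts := [seq x + e / k.+2%:R | k <- iota 0 (size P)].
have /hasP [t ts_t Pt_neq0] : has (fun t => P.[t] != 0) ts.
  apply: contraT; rewrite -all_predC => /allP all_roots.
  have : uniq ts.
    rewrite map_inj_uniq ?iota_uniq // => k l /addrI /(mulfI (lt0r_neq0 e_gt0)).
    by move/invr_inj/eqP; rewrite eqr_nat => /eqP [].
  move/(max_poly_roots P_neq0 (rs := ts)); rewrite size_map size_iota ltnn; apply.
  by apply/allP => t /all_roots /negPn.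
exists t => //; apply: xeA; case/mapP: ts_t => k _ ->.
rewrite -ball_normE /= opprD addNKr normrN gtr0_norm ?divr_gt0 ?ltr0n //.
by rewrite ltr_pdivrMr ?ltr0n // ltr_pMr // ltr1n.
Qed.

Lemma dense_row_free_mulmx r a b (E : 'M[R]_(r, a)) (M : 'M[R]_(a, b)) :
  row_free (E *m M) -> dense [set Q : 'M[R]_(a, b) | row_free (E *m Q)].
Proof.
move=> freeEM O [Q0 OQ0] openO.
pose L t : 'M[R]_(a, b) := Q0 + t *: (M - Q0).
have contL : continuous L.
  move=> t; apply: (@continuousD _ _ R^o (fun=> Q0) (fun t => t *: (M - Q0))).
    exact: cst_continuous.
  exact: scalel_continuous.
have near0_O : nbhs 0 (L @^-1` O).
  by apply: contL; rewrite /L scale0r addr0; exact: open_nbhs_nbhs.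
have [P P_gram] := gram_det_line_poly (E *m Q0) (E *m (M - Q0)).
have EL t : E *m L t = E *m Q0 + t *: (E *m (M - Q0)) by rewrite mulmxDr scalemxAr.
have P1_neq0 : P.[1] != 0.
  by rewrite P_gram scale1r -mulmxDr addrC subrK -row_free_gram.
have P_neq0 : P != 0 by apply: contraNneq P1_neq0 => ->; rewrite horner0.
have [t OLt Pt_neq0] := poly_nonroot_near P_neq0 near0_O.
by exists (L t); split => //=; rewrite row_free_gram EL -P_gram.
Qed.

Lemma dense_rank_mulmx_ge m a b (E : 'M[R]_(m, a)) (M : 'M[R]_(a, b)) k :
  (k <= \rank (E *m M))%N -> dense [set Q : 'M[R]_(a, b) | (k <= \rank (E *m Q))%N].
Proof.
move=> le_k_rkEM; pose f := maxrankfun (E *m M).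
have freeEM : row_free (rowsub f E *m M) by rewrite mul_rowsub_mx maxrowsub_free.
move=> O O_neq0 openO; have [Q [OQ /= freeEQ]] := dense_row_free_mulmx freeEM O_neq0 openO.
exists Q; split => //=; apply: leq_trans le_k_rkEM _.
by rewrite -{1}(eqP freeEQ) mul_rowsub_mx; exact/mxrankS/rowsub_sub.
Qed.

End Density.

Section FiniteIntersection.
Variable X : topologicalType.
Local Open Scope classical_set_scope.

Lemma open_dense_bigcap (I : finType) (F : I -> set X) :
  (forall i, open (F i)) -> (forall i, dense (F i)) ->
  open (\bigcap_i F i) /\ dense (\bigcap_i F i).
Proof.
move=> openF denseF.
have -> : \bigcap_i F i = \big[setI/setT]_(i <- enum I) F i.
  by rewrite -bigcap_seq; congr bigcap; rewrite predeqE => i; rewrite /= mem_enum.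
elim: (enum I) => [|i s [open_s dense_s]]; rewrite ?big_nil ?big_cons.
  by split=> [|O O_neq0 _]; [exact: openT | rewrite setIT].
by split; [exact: openI | exact: denseI].
Qed.

End FiniteIntersection.

Section Components.
Variable n : nat.
Implicit Type T : {set {set 'I_n}}.

Lemma connect_sym_adjT T : connect_sym (adjT T).
Proof. by apply: sym_connect_sym => i j; rewrite /adjT finset.setUC. Qed.

Definition nonroots T : {set 'I_n} := [set x | ~~ roots (adjT T) x].

Lemma ncompT_nonroots T : (ncompT T + #|nonroots T|)%N = n.
Proof.
rewrite -[RHS]card_ord -(cardC (roots (adjT T))) /ncompT /n_comp_mem.
by congr (_ + _)%N; apply: eq_card => x; rewrite !inE ?andbT.
Qed.

Definition rank_bound d T := minn #|nonroots T| d.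

Lemma dim_boundE d T : dim_bound d T = (rank_bound d T)%:Z - 1.
Proof.
rewrite /dim_bound /rank_bound; have := ncompT_nonroots T.
move: (ncompT T) #|nonroots T| => c k ck_n; lia.
Qed.

End Components.

Section EdgeDirections.
Variables (R : realType) (n d : nat).
Implicit Types (Q : 'M[R]_(n, d)) (T : {set {set 'I_n}}).

Lemma dirspace_edge_sub Q T i j :
  [set i; j] \in T -> (row j Q - row i Q <= dirspace Q T)%MS.
Proof. by move=> Tij; apply: (sumsmx_sup (i, j)) => //; rewrite genmxE. Qed.

Lemma dirspace_connect_sub Q T x y :
  connect (adjT T) x y -> (row y Q - row x Q <= dirspace Q T)%MS.
Proof.
case/connectP => p; elim: p x => [|z p IHp] x /= => [_ ->|/andP [Txz zp] y_last].
  by rewrite subrr sub0mx.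
by rewrite -(subrKA (row z Q)) addmx_sub ?(IHp z) ?dirspace_edge_sub.
Qed.

Lemma rank_dirspace_le Q T : (\rank (dirspace Q T) <= rank_bound d T)%N.
Proof.
rewrite leq_min rank_leq_col andbT.
pose r := fingraph.root (adjT T).
pose D := \matrix_(x < n) (row x Q - row (r x) Q).
have sub_D : (dirspace Q T <= D)%MS.
  apply/sumsmx_subP => [[i j]] /= Tij; rewrite genmxE.
  have rij : r i = r j.
    by apply/(fingraph.rootP (connect_sym_adjT T))/connect1.
  have -> : row j Q - row i Q = row j D - row i D.
    by rewrite !rowK rij opprB addrA subrK.
  by rewrite addmx_sub ?eqmx_opp ?row_sub.
have D_nonroots : (D <= rowsub (enum_val : 'I_#|nonroots T| -> 'I_n) D)%MS.
  apply/row_subP => x; have [x_nr|] := boolP (x \in nonroots T).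
    by rewrite -(enum_rankK_in x_nr x_nr) -row_rowsub row_sub.
  by rewrite inE negbK => /eqP rx; rewrite rowK /r rx subrr sub0mx.
exact: leq_trans (mxrankS (submx_trans sub_D D_nonroots)) (rank_leq_row _).
Qed.

Lemma rank_dirspace_witness T :
  exists M : 'M[R]_(n, d), (rank_bound d T <= \rank (dirspace M T))%N.
Proof.
set N := nonroots T; set b := rank_bound d T.
(* The k-th non-root vertex goes to the k-th basis vector (to 0 once k >= d),
   every root goes to 0. *)
pose M : 'M[R]_(n, d) :=
  \matrix_(x, c) ((x \in N) && (c == index x (enum N) :> nat))%:R.
exists M; have le_b_d : (b <= d)%N by exact: geq_minr.
rewrite -{1}(@rank_pid_mx R d d b le_b_d le_b_d); apply/mxrankS/row_subP => c.
have [lt_c_b|le_b_c] := ltnP c b; last first.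
  by rewrite (_ : row c _ = 0) ?sub0mx //; apply/rowP => j; rewrite !mxE ltnNge le_b_c andbF.
have lt_c_N : (c < #|N|)%N by apply: leq_trans lt_c_b (geq_minl _ _).
pose x := enum_val (Ordinal lt_c_N); pose r := fingraph.root (adjT T).
have index_x : index x (enum N) = c.
  by rewrite /x (enum_val_nth x) index_uniq ?enum_uniq -?cardE.
have rx_root : r x \notin N by rewrite inE negbK; exact: roots_root (connect_sym_adjT T) x.
have -> : row c (pid_mx b) = row x M - row (r x) M.
  apply/rowP => j; rewrite !mxE (negbTE rx_root) subr0 enum_valP index_x lt_c_b andbT.
  by rewrite eq_sym.
by apply: dirspace_connect_sub; rewrite connect_sym_adjT connect_root.
Qed.

Definition incidence_mx T : 'M[R]_(#|{: 'I_n * 'I_n}|, n) :=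
  \matrix_k (let ij := enum_val k in
             if [set ij.1; ij.2] \in T then delta_mx 0 ij.2 - delta_mx 0 ij.1 else 0).

Lemma mxrank_incidence_mulmx Q T :
  \rank (incidence_mx T *m Q) = \rank (dirspace Q T).
Proof.
have row_EQ k : row k (incidence_mx T *m Q) =
    let ij := enum_val k in
    if [set ij.1; ij.2] \in T then row ij.2 Q - row ij.1 Q else 0.
  by rewrite row_mul rowK /=; case: ifP; rewrite ?mul0mx // mulmxBl -!rowE.
apply/eqP; rewrite eqn_leq; apply/andP; split; apply: mxrankS.
  apply/row_subP => k; rewrite row_EQ /=; case: ifP => Tk; last exact: sub0mx.
  exact: dirspace_edge_sub.
apply/sumsmx_subP => ij /= Tij; rewrite genmxE.
by have := row_sub (enum_rank ij) (incidence_mx T *m Q); rewrite row_EQ /= enum_rankK Tij.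
Qed.

End EdgeDirections.

Section Stars.
Variables (R : realType) (n d : nat).
Implicit Types (Q : 'M[R]_(n, d)) (S : {set 'I_n}).

Definition star (s0 : 'I_n) S : {set {set 'I_n}} := [set [set s0; x] | x in S].

Lemma pairset_star s0 S : s0 \notin S -> pairset (star s0 S).
Proof.
move=> s0_notin_S _ /imsetP [x Sx ->]; rewrite cards2.
by case: eqVneq s0_notin_S => // ->; rewrite Sx.
Qed.

Lemma card_le_nonroots_star s0 S :
  s0 \notin S -> (#|S| <= #|nonroots (star s0 S)|)%N.
Proof.
move=> s0_notin_S; set r := fingraph.root (adjT (star s0 S)) s0.
have sub_nonroots : (s0 |: S) :\ r \subset nonroots (star s0 S).
  apply/fintype.subsetP => x; rewrite !inE => /andP [x_neq_r x_in]; apply: contra x_neq_r.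
  move/eqP <-; apply/eqP/(fingraph.rootP (connect_sym_adjT _)).
  case/orP: x_in => [/eqP -> //|Sx]; rewrite connect_sym_adjT; apply: connect1.
  exact: imset_f.
apply: leq_trans (subset_leq_card sub_nonroots).
by rewrite -(leq_add2l (r \in s0 |: S)) -cardsD1 cardsU1 s0_notin_S leq_add2r leq_b1.
Qed.

Definition star_mx Q s0 S : 'M[R]_(#|S|, d) :=
  \matrix_k (row (enum_val k) Q - row s0 Q).

Lemma dirspace_star_sub Q s0 S : (dirspace Q (star s0 S) <= star_mx Q s0 S)%MS.
Proof.
have spoke_sub y : y \in s0 |: S -> (row y Q - row s0 Q <= star_mx Q s0 S)%MS.
  case/setU1P => [->|Sy]; first by rewrite subrr sub0mx.
  by rewrite -(enum_rankK_in Sy Sy) -(rowK (fun k => row (enum_val k) Q - row s0 Q)) row_sub.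
apply/sumsmx_subP => [[i j]] /= /imsetP [x Sx ij_x]; rewrite genmxE.
have ends_in y : y \in [set i; j] -> y \in s0 |: S.
  by rewrite ij_x => /set2P [->|->]; rewrite !inE ?eqxx ?Sx ?orbT.
have -> : row j Q - row i Q = (row j Q - row s0 Q) - (row i Q - row s0 Q).
  by rewrite opprB addrA subrK.
by rewrite addmx_sub ?eqmx_opp ?spoke_sub ?ends_in ?set21 ?set22.
Qed.

Lemma affine_indep_star Q s0 S :
  s0 \notin S -> row_free (star_mx Q s0 S) -> affine_indep Q (s0 |: S).
Proof.
move=> s0_notin_S free_star l sum_l0 sum_lQ0.
have l_S0 : forall x, x \in S -> l x = 0.
  pose lam : 'rV_#|S| := \row_k l (enum_val k).
  have : lam *m star_mx Q s0 S = 0.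
    rewrite mulmx_sum_row (eq_bigr (fun k => l (enum_val k) *: (row (enum_val k) Q - row s0 Q))).
      rewrite -(big_enum_val (fun x => l x *: (row x Q - row s0 Q))) /=.
      rewrite -[LHS]add0r -{1}(scaler0 _ (l s0)) -{1}(subrr (row s0 Q)).
      rewrite -big_setU1 //= (eq_bigr (fun x => l x *: row x Q - l x *: row s0 Q)).
        by rewrite sumrB -scaler_suml sum_l0 sum_lQ0 scale0r subrr.
      by move=> x _; rewrite scalerBr.
    by move=> k _; rewrite !mxE rowK.
  rewrite -(mul0mx _ (star_mx Q s0 S)) => /(row_free_inj free_star) lam0 x Sx.
  by have := congr1 (fun v : 'rV_#|S| => v 0 (enum_rank_in Sx x)) lam0; rewrite !mxE enum_rankK_in.
move=> x /setU1P [->|]; last exact: l_S0.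
by move: sum_l0; rewrite big_setU1 //= big1 ?addr0.
Qed.

Lemma simple_position_of_rank Q :
  (forall T, pairset T -> (rank_bound d T <= \rank (dirspace Q T))%N) ->
  simple_position Q.
Proof.
move=> rankQ S card_S; have [->|[s0 S_s0]] := set_0Vmem S; first by move=> l _ _ i; rewrite inE.
rewrite -(finset.setD1K S_s0); set S' := S :\ s0.
have s0_notin_S' : s0 \notin S' by rewrite !inE eqxx.
apply: affine_indep_star => //; rewrite /row_free eqn_leq rank_leq_row /=.
have le_S'_d : (#|S'| <= d)%N by move: card_S; rewrite (cardsD1 s0 S) S_s0 add1n ltnS.
apply: leq_trans (mxrankS (dirspace_star_sub Q s0 S')).
apply: leq_trans (rankQ _ (pairset_star s0_notin_S')).
by rewrite leq_min le_S'_d card_le_nonroots_star.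
Qed.

Lemma distinct_pts_of_simple_position Q :
  (1 <= d)%N -> simple_position Q -> distinct_pts Q.
Proof.
move=> d_gt0 simpleQ i j Qij; apply/eqP/negP => /negP ij.
pose l k : R := (k == i)%:R - (k == j)%:R.
have card_ij : (#|[set i; j]| <= d.+1)%N by rewrite cards2 ij.
have i_notin_j : i \notin [set j] by rewrite inE.
have l_sum : \sum_(k in [set i; j]) l k = 0.
  by rewrite big_setU1 //= big_set1 /l !eqxx (negbTE ij) eq_sym (negbTE ij) subr0 sub0r addrN.
have l_Q : \sum_(k in [set i; j]) l k *: row k Q = 0.
  rewrite big_setU1 //= big_set1 /l !eqxx (negbTE ij) eq_sym (negbTE ij) subr0 sub0r.
  by rewrite scale1r scaleN1r Qij addrN.
have := simpleQ _ card_ij l l_sum l_Q i (set21 i j).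
by rewrite /l eqxx (negbTE ij) subr0 => /eqP; rewrite oner_eq0.
Qed.

End Stars.

Section GenericPosition.
Variables (R : realType) (n d : nat).
Implicit Types (Q : 'M[R]_(n, d)) (T : {set {set 'I_n}}).
Local Open Scope classical_set_scope.

Definition rank_generic T : set 'M[R]_(n, d) :=
  [set Q | pairset T -> (rank_bound d T <= \rank (incidence_mx R T *m Q))%N].

Lemma open_rank_generic T : open (rank_generic T).
Proof.
have [pT|npT] := pselect (pairset T); last first.
  suff -> : rank_generic T = setT by exact: openT.
  by apply/seteqP; split => // Q _ /npT.
suff -> : rank_generic T = [set Q | (rank_bound d T <= \rank (incidence_mx R T *m Q))%N].
  exact/open_rank_ge/continuous_mulmx_entry.
by apply/seteqP; split => Q /= rkQ; [exact: rkQ | move=> _].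
Qed.

Lemma dense_rank_generic T : dense (rank_generic T).
Proof.
have [M rkM] := rank_dirspace_witness R d T.
rewrite -mxrank_incidence_mulmx in rkM.
move=> O O_neq0 openO; have [Q [OQ rkQ]] := dense_rank_mulmx_ge rkM O_neq0 openO.
by exists Q; split => // _.
Qed.

Lemma dimT_eq_bound Q T :
  dimT Q T = dim_bound d T <-> (rank_bound d T <= \rank (dirspace Q T))%N.
Proof.
rewrite /dimT dim_boundE; split => [/addIr [->] //|le_bound_rk].
suff -> : \rank (dirspace Q T) = rank_bound d T by [].
by apply/eqP; rewrite eqn_leq le_bound_rk rank_dirspace_le.
Qed.

Lemma generic_setE : (1 <= d)%N -> generic_set R n d = \bigcap_T rank_generic T.
Proof.
move=> d_gt0; have rk_E := mxrank_incidence_mulmx.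
apply/seteqP; split => Q /=.
  by case=> _ eqQ T _ pT; rewrite rk_E; apply/dimT_eq_bound/eqQ.
move=> genQ.
have rankQ T : pairset T -> (rank_bound d T <= \rank (dirspace Q T))%N.
  by move=> pT; rewrite -rk_E; exact: genQ.
split; last by move=> T pT; apply/dimT_eq_bound/rankQ.
exact/(distinct_pts_of_simple_position d_gt0)/simple_position_of_rank.
Qed.

End GenericPosition.

Theorem lemma5p5 (R : realType) (n d : nat) (hn : (1 <= n)%N) (hd : (1 <= d)%N) :
  (forall (Q : 'M[R]_(n, d)) (T : {set {set 'I_n}}),
      distinct_pts Q -> pairset T -> dimT Q T <= dim_bound d T)
  /\ open (generic_set R n d)
  /\ dense (generic_set R n d)
  /\ (forall Q : 'M[R]_(n, d), generic_set R n d Q -> simple_position Q).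
Proof.
split; first by move=> Q T _ _; rewrite /dimT dim_boundE lerD2r lez_nat rank_dirspace_le.
rewrite generic_setE //.
have [open_gen dense_gen] := open_dense_bigcap (@open_rank_generic R n d) (@dense_rank_generic R n d).
do 2!split => //.
move=> Q genQ; apply: simple_position_of_rank => T pT.
by rewrite -mxrank_incidence_mulmx; exact: genQ.
Qed.
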